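(* Let $k\ge 3$, let $\alpha$ be a primitive element of $\mathbb{F}_{2^k}$, and let $0\le j\le 2^k-2$. Define $S_j=\{\{(\alpha^j,\alpha^j x): x\in B_i\} : 1\le i\le 6\}$ and $\mathbb{S}_j=\{\langle A\rangle : A\in S_j\}$. Then $\mathbb{S}_j$ consists of six $k$-dimensional subspaces of $\mathbb{F}_2^{2k}$, each contained in $V_{\mathbf 0}^{(2k,k)}\cup V_{\alpha^j}^{(2k,k)}$, and every $2$-dimensional subspace $X\subseteq V_{\mathbf 0}^{(2k,k)}\cup V_{\alpha^j}^{(2k,k)}$ that is not contained in $V_{\mathbf 0}^{(2k,k)}$ is contained in at least one element of $\mathbb{S}_j$.
   Context: $\mathbb{F}_2^k$ is identified with $\mathbb{F}_{2^k}$ via a fixed $\mathbb{F}_2$-linear isomorphism (elements are written as binary $k$-tuples or as field elements interchangeably); $(a,b)\in\mathbb{F}_2^{2k}$ denotes concatenation of $a,b\in\mathbb{F}_2^k$, and $\langle A\rangle$ is the $\mathbb{F}_2$-span of $A$. For $x\in\mathbb{F}_2^\ell$, $V_x^{(n,\ell)}$ denotes the set of vectors of $\mathbb{F}_2^n$ whose first $\ell$ coordinates equal $x$. The sets $B_1,\dots,B_6\subseteq\mathbb{F}_2^k$ ($k\ge3$) are: $B_1$ = vectors with first coordinate $0$; $B_2$ = first coordinate $1$; $B_3$ = first two coordinates $00$ or $10$; $B_4$ = first two coordinates $01$ or $11$; $B_5$ = first two coordinates $00$ or $11$; $B_6$ = first two coordinates $01$ or $10$. *)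

From HB Require Import structures.
From mathcomp Require Import all_boot all_order all_algebra all_field.
Set Implicit Arguments. Unset Strict Implicit. Unset Printing Implicit Defensive.
Import GRing.Theory.

(* c-th coordinate (0-based) of a vector of F_2^n, i.e. x_{c+1}; 0 if out of range *)
Definition coordF2 (n : nat) (x : 'rV['F_2]_n) (c : nat) : 'F_2 :=
  if @insub nat (fun m => m < n)%N 'I_n c is Some c' then x ord0 c' else 0%R.

Definition Bset (n : nat) (i : nat) : {set 'rV['F_2]_n} :=
  match i with
  | 1 => [set x | coordF2 x 0 == 0%R]
  | 2 => [set x | coordF2 x 0 == 1%R]
  | 3 => [set x | ((coordF2 x 0, coordF2 x 1) == (0%R, 0%R))
                  || ((coordF2 x 0, coordF2 x 1) == (1%R, 0%R))]
  | 4 => [set x | ((coordF2 x 0, coordF2 x 1) == (0%R, 1%R))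
                  || ((coordF2 x 0, coordF2 x 1) == (1%R, 1%R))]
  | 5 => [set x | ((coordF2 x 0, coordF2 x 1) == (0%R, 0%R))
                  || ((coordF2 x 0, coordF2 x 1) == (1%R, 1%R))]
  | 6 => [set x | ((coordF2 x 0, coordF2 x 1) == (0%R, 1%R))
                  || ((coordF2 x 0, coordF2 x 1) == (1%R, 0%R))]
  | _ => set0
  end.

(* The set {(alpha^j, alpha^j x) : x in B_i} in F_2^{2k}, where F_2^k is
   identified with the field F via phi : F -> F_2^k, and (a,b) is row_mx a b. *)
Definition Sset (F : finFieldType) (k : nat) (phi : F -> 'rV['F_2]_k)
    (alpha : F) (j i : nat) : {set 'rV['F_2]_(k + k)} :=
  [set row_mx (phi (alpha ^+ j)%R) (phi (alpha ^+ j * y)%R)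
     | y in [set y : F | phi y \in Bset k i]].

Definition SSpan (F : finFieldType) (k : nat) (phi : F -> 'rV['F_2]_k)
    (alpha : F) (j i : nat) : {vspace 'rV['F_2]_(k + k)} :=
  (<<enum (Sset phi alpha j i)>>)%VS.

Definition Vfirst (k : nat) (x : 'rV['F_2]_k) : {set 'rV['F_2]_(k + k)} :=
  [set v | lsubmx v == x].

From HB Require Import structures.
From mathcomp Require Import all_boot all_order all_algebra all_field.
Set Implicit Arguments. Unset Strict Implicit. Unset Printing Implicit Defensive.
Import GRing.Theory.
Local Open Scope ring_scope.

(* Write u = phi(alpha^j) and a = alpha^j.  Each B_i is an
   affine hyperplane {x | l_i x = b_i} of F_2^k, where l_i is one of the three
   nonzero forms x_1, x_2, x_1 + x_2 and b_i = 0 or 1.  Transporting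
   y |-> a y through phi, the generating set of S_j,i becomes
   {(u, r) : L_i r = b_i} with L_i = l_i o (r |-> phi(a^-1 psi r)), again a
   nonzero form. *)

Lemma F2_cases (c : 'F_2) : c = 0 \/ c = 1.
Proof. by case: c => [[|[|n]] h]; [left; apply/val_inj | right; apply/val_inj |]. Qed.

Lemma F2_addxx (c : 'F_2) : c + c = 0.
Proof. by case: (F2_cases c) => ->; apply/eqP. Qed.

Lemma F2_scale_inj n (u : 'rV['F_2]_n) (s t : 'F_2) :
  u != 0 -> s *: u = t *: u -> s = t.
Proof.
move=> u_neq0; case: (F2_cases s) => ->; case: (F2_cases t) => -> //;
  rewrite scale0r scale1r => h; by rewrite ?h eqxx in u_neq0.
Qed.

Lemma additive0 (U V : zmodType) (f : U -> V) :
  (forall x y, f (x + y) = f x + f y) -> f 0 = 0.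
Proof. by move=> fD; apply: (@addrI _ (f 0)); rewrite -fD !addr0. Qed.

Lemma additiveZ_F2 (V : lmodType 'F_2) (L : V -> 'F_2) :
  (forall x y, L (x + y) = L x + L y) -> forall s x, L (s *: x) = s * L x.
Proof.
move=> LD s x; case: (F2_cases s) => ->;
  by rewrite ?scale0r ?scale1r ?mul0r ?mul1r ?(additive0 LD).
Qed.

Section LiftedHyperplane.
Variables (m n : nat) (u : 'rV['F_2]_m) (L : 'rV['F_2]_n -> 'F_2) (b : 'F_2).
Hypothesis u_neq0 : u != 0.
Hypothesis LD : forall x y, L (x + y) = L x + L y.

Definition lift_hyp : {set 'rV['F_2]_(m + n)} :=
  [set row_mx u r | r in [set r | L r == b]].

(* The subspace {(t u, r) : L r = t b}, which will be the span of lift_hyp. *)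
Definition lift_space : {set 'rV['F_2]_(m + n)} :=
  [set v | [exists t : 'F_2, (lsubmx v == t *: u) && (L (rsubmx v) == t * b)]].

Lemma lift_spaceP v :
  reflect (exists t, lsubmx v = t *: u /\ L (rsubmx v) = t * b) (v \in lift_space).
Proof.
rewrite inE; apply: (iffP existsP) => -[t].
  by move=> /andP[/eqP ? /eqP ?]; exists t.
by move=> [-> ->]; exists t; rewrite !eqxx.
Qed.

(* Since u != 0, the height t of an element of lift_space is determined. *)
Lemma row_lift_space t r : (row_mx (t *: u) r \in lift_space) = (L r == t * b).
Proof.
apply/lift_spaceP/eqP => [[t' []]|hr]; last by exists t; rewrite row_mxKl row_mxKr.
by rewrite row_mxKl row_mxKr => /(F2_scale_inj u_neq0) ->.
Qed.

Let LZ := additiveZ_F2 LD.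

Lemma lift_space0 : 0 \in lift_space.
Proof. by apply/lift_spaceP; exists 0; rewrite !linear0 scale0r mul0r (additive0 LD). Qed.

Lemma lift_spaceD v w : v \in lift_space -> w \in lift_space -> v + w \in lift_space.
Proof.
move=> /lift_spaceP[s [hl hr]] /lift_spaceP[t [hl' hr']]; apply/lift_spaceP.
by exists (s + t); rewrite !linearD /= hl hl' scalerDl LD hr hr' mulrDl.
Qed.

Lemma lift_spaceZ s v : v \in lift_space -> s *: v \in lift_space.
Proof.
move=> /lift_spaceP[t [hl hr]]; apply/lift_spaceP.
by exists (s * t); rewrite !linearZ /= hl scalerA LZ hr mulrA.
Qed.

Variable c : 'rV['F_2]_n.
Hypothesis Lc : L c = 1.

(* The span of the lifted hyperplane is lift_space: a vector of height 0 is
   the difference of two vectors of height 1. *)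
Lemma span_lift_hyp : <<enum lift_hyp>>%VS =i lift_space.
Proof.
have mem_hyp r : L r = b -> row_mx u r \in <<enum lift_hyp>>%VS.
  by move=> hr; apply: memv_span; rewrite mem_enum; apply: imset_f; rewrite inE hr.
move=> v; apply/idP/idP.
  move/(coord_span (X := in_tuple (enum lift_hyp))) ->.
  apply: (big_ind (fun x => x \in lift_space)).
  - exact: lift_space0.
  - exact: lift_spaceD.
  - move=> i _; apply: lift_spaceZ; have := mem_nth 0 (ltn_ord i).
    rewrite mem_enum => /imsetP[r + ->].
    by rewrite inE -{1}[u]scale1r row_lift_space mul1r.
case/lift_spaceP => t [hl hr]; rewrite -(hsubmxK v) hl.
case: (F2_cases t) => ht; rewrite ht ?scale1r ?mul1r in hr *; last exact: mem_hyp.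
have -> : row_mx (0 *: u) (rsubmx v) = row_mx u (rsubmx v + b *: c) - row_mx u (b *: c).
  by rewrite opp_row_mx add_row_mx subrr scale0r addrK.
by apply: memvB; apply: mem_hyp; rewrite ?LD LZ Lc mulr1 // hr mul0r add0r.
Qed.

(* An explicit bijection F_2^n -> lift_space; when b = 0 the correction by
   L r *: c moves r into the kernel of L. *)
Definition lift_param (r : 'rV['F_2]_n) : 'rV['F_2]_(m + n) :=
  row_mx (L r *: u) (r + ((1 + b) * L r) *: c).

Lemma lift_param_inj : injective lift_param.
Proof.
move=> r1 r2 /eq_row_mx[/(F2_scale_inj u_neq0) hL].
by rewrite hL => /addIr.
Qed.

Lemma lift_space_param : lift_space = [set lift_param r | r in setT].
Proof.
apply/setP => v; apply/idP/imsetP => [/lift_spaceP[t [hl hr]]|[r _ ->]].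
  have Lr : L (rsubmx v + ((1 + b) * t) *: c) = t.
    by rewrite LD LZ Lc mulr1 hr mulrDl mul1r (mulrC b) addrCA F2_addxx addr0.
  exists (rsubmx v + ((1 + b) * t) *: c) => //.
  by rewrite /lift_param Lr -addrA -scalerDl F2_addxx scale0r addr0 -hl hsubmxK.
rewrite /lift_param row_lift_space LD LZ Lc mulr1; apply/eqP.
by rewrite mulrDl mul1r addrA F2_addxx add0r mulrC.
Qed.

(* Counting: the span has 2^n elements, so its dimension is n. *)
Lemma dim_span_lift_hyp : \dim <<enum lift_hyp>> = n.
Proof.
have := card_vspace <<enum lift_hyp>>%VS.
rewrite (eq_card span_lift_hyp) lift_space_param card_imset; last exact: lift_param_inj.
by rewrite cardsT card_mx mul1n card_Fp // => /(expnI (ltnSn 1)).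
Qed.

End LiftedHyperplane.

(* lift_space recovers its form and constant: test on (0, r) and on (u, 0). *)
Lemma lift_space_eq m n (u : 'rV['F_2]_m) (L1 L2 : 'rV['F_2]_n -> 'F_2) b1 b2 :
  u != 0 ->
  (forall x y, L1 (x + y) = L1 x + L1 y) -> (forall x y, L2 (x + y) = L2 x + L2 y) ->
  lift_space u L1 b1 =i lift_space u L2 b2 -> L1 =1 L2 /\ b1 = b2.
Proof.
move=> u_neq0 L1D L2D E; split.
  move=> r; have := E (row_mx (0 *: u) r); rewrite !row_lift_space // !mul0r.
  by case: (F2_cases (L1 r)) (F2_cases (L2 r)) => -> [] ->.
have := E (row_mx (1 *: u) 0); rewrite !row_lift_space // !mul1r !additive0 //.
by case: (F2_cases b1) (F2_cases b2) => -> [] ->.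
Qed.

(* A plane inside V_0 u V_u, not inside V_0, is spanned by a vector of V_u and
   a vector of V_0; the latter is v2 or v1 + v2 for any v2 off the line of v1. *)
Lemma plane_split m n (u : 'rV['F_2]_m) (X : {vspace 'rV['F_2]_(m + n)}) :
  u != 0 -> \dim X = 2 ->
  (forall v, v \in X -> (lsubmx v == 0) || (lsubmx v == u)) ->
  ~ (forall v, v \in X -> lsubmx v == 0) ->
  exists v1 w, [/\ lsubmx v1 = u, lsubmx w = 0 & X = <<[:: w; v1]>>%VS].
Proof.
move=> u_neq0 dimX hX notV0.
have [v1 v1X hv1] : exists2 v1, v1 \in X & lsubmx v1 = u.
  case: (pickP (fun v => (v \in X) && (lsubmx v != 0))) => [v /andP[vX hv] | none].
    by exists v => //; move: (hX v vX); rewrite (negbTE hv) => /eqP.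
  by case: notV0 => v vX; move: (none v); rewrite vX => /negbFE.
have [v2 v2X v2_notin] : exists2 v2, v2 \in X & v2 \notin <[v1]>%VS.
  by apply/subvPn/negP => /dimvS; rewrite dimX dim_vline; case: (_ != 0).
set w := if lsubmx v2 == 0 then v2 else v1 + v2.
have wX : w \in X by rewrite /w; case: ifP => _; rewrite ?memvD.
have hw : lsubmx w = 0.
  rewrite /w; case: ifP => [/eqP // | /negbT hv2]; move: (hX v2 v2X).
  rewrite (negbTE hv2) linearD /= hv1 => /eqP->.
  by rewrite -[u]scale1r -scalerDl F2_addxx scale0r.
have w_notin : w \notin <[v1]>%VS.
  rewrite /w; case: ifP => _ //; apply: contra v2_notin => h.
  by rewrite -(addKr v1 v2) addrC memvB ?memv_line.
have v1_neq0 : v1 != 0 by apply: contra_neq u_neq0 => v1_0; rewrite -hv1 v1_0 linear0.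
exists v1, w; split => //; apply/eqP; rewrite eq_sym eqEdim dimX.
have /eqP-> : free [:: w; v1] by rewrite free_cons span_seq1 w_notin seq1_free.
by rewrite leqnn andbT; apply/span_subvP => x; rewrite !inE => /orP[]/eqP->.
Qed.

Lemma coordF2D n (x y : 'rV['F_2]_n) c :
  coordF2 (x + y) c = coordF2 x c + coordF2 y c.
Proof. by rewrite /coordF2; case: insubP => [c' _ _|_]; rewrite ?mxE ?addr0. Qed.

Lemma coordF2_delta n (i : 'I_n) c : coordF2 (delta_mx 0 i) c = (i == c :> nat)%:R.
Proof.
rewrite /coordF2; case: insubP => [c' _ <- | ]; first by rewrite mxE [c' == i]eq_sym.
by move=> c_ge; have /negbTE-> : (i != c :> nat) by apply: contraNneq c_ge => <-.
Qed.

Definition Bform n (i : nat) (x : 'rV['F_2]_n) : 'F_2 :=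
  match i with
  | 1 | 2 => coordF2 x 0
  | 3 | 4 => coordF2 x 1
  | _ => coordF2 x 0 + coordF2 x 1
  end.

Definition Bconst (i : nat) : 'F_2 := if odd i then 0 else 1.

Lemma BformD n i (x y : 'rV['F_2]_n) : Bform i (x + y) = Bform i x + Bform i y.
Proof. by rewrite /Bform; do 5?[case: i => [|i]]; rewrite !coordF2D // addrACA. Qed.

Lemma Bset_form n i (x : 'rV['F_2]_n) : (1 <= i <= 6)%N ->
  (x \in Bset n i) = (Bform i x == Bconst i).
Proof.
move=> hi; do 7?[case: i hi => [|i] hi //]; rewrite /Bset /Bform /Bconst inE;
  by case: (F2_cases (coordF2 x 0)) (F2_cases (coordF2 x 1)) => h0 [] h1; rewrite ?h0 ?h1.
Qed.

Lemma Bform_onto n i :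
  (1 < n)%N -> (1 <= i <= 6)%N -> exists e : 'rV['F_2]_n, Bform i e = 1.
Proof.
move=> n_gt1 hi; have n_gt0 := ltnW n_gt1.
exists (delta_mx 0 (if i \in [:: 3; 4]%N then Ordinal n_gt1 else Ordinal n_gt0)).
by do 7?[case: i hi => [|i] hi //]; rewrite /Bform !coordF2_delta /= ?addr0.
Qed.

(* The key combinatorial fact behind the covering property: for any x, y one
   of the six hyperplanes has l_i x = 0 and l_i y = b_i: take the form x_1 if
   x_1 = 0, else x_2 if x_2 = 0, else x_1 + x_2, and the constant its value at y. *)
Lemma Bform_choice n (x y : 'rV['F_2]_n) :
  exists2 i, (1 <= i <= 6)%N & Bform i x = 0 /\ Bform i y = Bconst i.
Proof.
case: (F2_cases (coordF2 x 0)) (F2_cases (coordF2 x 1)) => x0 [] x1;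
case: (F2_cases (coordF2 y 0)) (F2_cases (coordF2 y 1)) => y0 [] y1;
  [exists 1%N | exists 1%N | exists 2%N | exists 2%N | exists 1%N | exists 1%N
  | exists 2%N | exists 2%N | exists 3%N | exists 4%N | exists 3%N | exists 4%N
  | exists 5%N | exists 6%N | exists 6%N | exists 5%N];
  by rewrite // /Bform /Bconst ?x0 ?x1 ?y0 ?y1 ?F2_addxx ?addr0 ?add0r.
Qed.

Lemma Bform_inj n i1 i2 : (1 < n)%N -> (1 <= i1 <= 6)%N -> (1 <= i2 <= 6)%N ->
  (forall x : 'rV['F_2]_n, Bform i1 x = Bform i2 x) -> Bconst i1 = Bconst i2 -> i1 = i2.
Proof.
move=> n_gt1 hi1 hi2 eqB; have := eqB (delta_mx 0 (Ordinal n_gt1)).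
have := eqB (delta_mx 0 (Ordinal (ltnW n_gt1))); rewrite /Bform /Bconst !coordF2_delta /=.
clear eqB; do 7?[case: i1 hi1 => [|i1] hi1 //]; do 7?[case: i2 hi2 => [|i2] hi2 //].
Qed.

Lemma prim_root_neq0 (R : nzRingType) n (z : R) : n.-primitive_root z -> z != 0.
Proof.
move=> prim_z; apply/eqP => z0; move: (prim_expr_order prim_z).
by rewrite z0 expr0n gtn_eqF ?(prim_order_gt0 prim_z) // => /eqP; rewrite eq_sym oner_eq0.
Qed.

Section FieldCoordinates.
Variables (k : nat) (F : finFieldType) (phi : F -> 'rV['F_2]_k) (psi : 'rV['F_2]_k -> F).
Variables (alpha : F) (j : nat).
Hypothesis phiD : forall x y, phi (x + y) = phi x + phi y.
Hypotheses (phiK : cancel phi psi) (psiK : cancel psi phi).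
Hypothesis a_neq0 : alpha ^+ j != 0.

Local Notation a := (alpha ^+ j).

Definition unscale (r : 'rV['F_2]_k) : 'rV['F_2]_k := phi (a^-1 * psi r).

Definition Lform (i : nat) (r : 'rV['F_2]_k) : 'F_2 := Bform i (unscale r).

Lemma LformD i r s : Lform i (r + s) = Lform i r + Lform i s.
Proof.
rewrite /Lform /unscale -BformD -phiD -mulrDr; congr (Bform i (phi (_ * _))).
by apply: (can_inj phiK); rewrite phiD !psiK.
Qed.

Lemma unscale_scale r : unscale (phi (a * psi r)) = r.
Proof. by rewrite /unscale phiK mulKf // psiK. Qed.

Lemma phi_a_neq0 : phi a != 0.
Proof.
by apply: contra_neq a_neq0 => pa0; apply: (can_inj phiK); rewrite pa0 additive0.
Qed.

Lemma Sset_lift i : (1 <= i <= 6)%N ->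
  Sset phi alpha j i = lift_hyp (phi a) (Lform i) (Bconst i).
Proof.
move=> hi; apply/setP => v; apply/imsetP/imsetP => -[y]; rewrite !inE => hy ->.
  by exists (phi (a * y)); rewrite // inE /Lform /unscale phiK mulKf // -Bset_form.
exists (a^-1 * psi y); first by rewrite inE Bset_form.
by rewrite mulrA divff // mul1r psiK.
Qed.

Hypothesis k_gt1 : (1 < k)%N.

Lemma Lform_onto i : (1 <= i <= 6)%N -> exists c, Lform i c = 1.
Proof.
move=> hi; have [e Be] := Bform_onto k_gt1 hi.
by exists (phi (a * psi e)); rewrite /Lform unscale_scale.
Qed.

Lemma mem_SSpan i v : (1 <= i <= 6)%N ->
  (v \in SSpan phi alpha j i) = (v \in lift_space (phi a) (Lform i) (Bconst i)).
Proof.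
move=> hi; have [c Lc] := Lform_onto hi.
by rewrite /SSpan Sset_lift // (span_lift_hyp _ phi_a_neq0 (LformD i) Lc).
Qed.

Lemma dim_SSpan i : (1 <= i <= 6)%N -> \dim (SSpan phi alpha j i) = k.
Proof.
move=> hi; have [c Lc] := Lform_onto hi.
by rewrite /SSpan Sset_lift // (dim_span_lift_hyp _ phi_a_neq0 (LformD i) Lc).
Qed.

(* Every vector of lift_space has height 0 or phi a. *)
Lemma SSpan_in_union i v : (1 <= i <= 6)%N -> v \in SSpan phi alpha j i ->
  v \in Vfirst 0 :|: Vfirst (phi a).
Proof.
move=> hi; rewrite mem_SSpan // => /lift_spaceP[t [hl _]]; rewrite !inE hl.
by case: (F2_cases t) => ->; rewrite ?scale0r ?scale1r eqxx ?orbT.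
Qed.

Lemma SSpan_inj i1 i2 : (1 <= i1 <= 6)%N -> (1 <= i2 <= 6)%N ->
  SSpan phi alpha j i1 = SSpan phi alpha j i2 -> i1 = i2.
Proof.
move=> hi1 hi2 E; have [eqL eqb] : Lform i1 =1 Lform i2 /\ Bconst i1 = Bconst i2.
  apply: (lift_space_eq phi_a_neq0 (LformD i1) (LformD i2)) => v.
  by rewrite -!mem_SSpan // E.
apply: (Bform_inj k_gt1) => // x.
by move: (eqL (phi (a * psi x))); rewrite /Lform unscale_scale.
Qed.

(* Covering: a plane X = <w, v1> as in plane_split lies in the span chosen by
   Bform_choice for the coordinates of w and v1. *)
Lemma SSpan_cover (X : {vspace 'rV['F_2]_(k + k)}) : \dim X = 2 ->
  (forall v, v \in X -> v \in Vfirst 0 :|: Vfirst (phi a)) ->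
  ~ (forall v, v \in X -> v \in Vfirst 0) ->
  exists2 i, (1 <= i <= 6)%N & (X <= SSpan phi alpha j i)%VS.
Proof.
move=> dimX hX notV0.
have [v1 [w [hv1 hw ->]]] : exists v1 w,
    [/\ lsubmx v1 = phi a, lsubmx w = 0 & X = <<[:: w; v1]>>%VS].
  apply: plane_split phi_a_neq0 dimX _ _ => [v /hX | V0]; first by rewrite !inE.
  by apply: notV0 => v /V0; rewrite inE.
have [i hi [Lw Lv1]] := Bform_choice (unscale (rsubmx w)) (unscale (rsubmx v1)).
exists i => //; apply/span_subvP => x; rewrite !inE => /orP[]/eqP->;
  rewrite mem_SSpan //; apply/lift_spaceP.
- by exists 0; rewrite hw scale0r mul0r.
- by exists 1; rewrite hv1 scale1r mul1r.
Qed.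

End FieldCoordinates.

Theorem mainTheorem6 (k : nat) (F : finFieldType) (phi : F -> 'rV['F_2]_k)
    (alpha : F) (j : nat) :
  (3 <= k)%N ->
  #|F| = (2 ^ k)%N ->
  (forall x y : F, phi (x + y)%R = (phi x + phi y)%R) ->
  bijective phi ->
  ((2 ^ k - 1)%N.-primitive_root alpha)%R ->
  (j <= 2 ^ k - 2)%N ->
  [/\ (* the six spans are pairwise distinct *)
      (forall i1 i2, (1 <= i1 <= 6)%N -> (1 <= i2 <= 6)%N ->
         SSpan phi alpha j i1 = SSpan phi alpha j i2 -> i1 = i2),
      (* each is k-dimensional and lies in V_0 u V_{alpha^j} *)
      (forall i, (1 <= i <= 6)%N ->
         \dim (SSpan phi alpha j i) = k /\
         (forall v, v \in SSpan phi alpha j i ->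
            v \in Vfirst 0%R :|: Vfirst (phi (alpha ^+ j)%R))) &
      (* covering of 2-dimensional subspaces *)
      (forall X : {vspace 'rV['F_2]_(k + k)},
         \dim X = 2%N ->
         (forall v, v \in X -> v \in Vfirst 0%R :|: Vfirst (phi (alpha ^+ j)%R)) ->
         ~ (forall v, v \in X -> v \in Vfirst 0%R) ->
         exists2 i, (1 <= i <= 6)%N & (X <= SSpan phi alpha j i)%VS)].
Proof.
move=> k_ge3 _ phiD [psi phiK psiK] prim_alpha _.
have k_gt1 : (1 < k)%N := ltnW k_ge3.
have a_neq0 : alpha ^+ j != 0 by rewrite expf_neq0 // (prim_root_neq0 prim_alpha).
split.
- exact: SSpan_inj phiD phiK psiK a_neq0 k_gt1.
- move=> i hi; split; first exact: dim_SSpan phiD phiK psiK a_neq0 k_gt1 i hi.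
  by move=> v; apply: SSpan_in_union phiD phiK psiK a_neq0 k_gt1 i v hi.
- exact: SSpan_cover phiD phiK psiK a_neq0 k_gt1.
Qed.
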